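(* Let $q\in\mathbb{C}$ with $0<|q|<1$, and let $a,b,c,d,e$ be complex numbers such that at least one of $a$, $b$, $c$ is of the form $q^n$ with $n\in\{1,2,\ldots\}$ (and such that all terms below are well defined). Then \[ \sum_{k=-\infty}^\infty \frac{(q/a,q/b,q/c,q/d,q/e)_k}{(a,bq,cq,dq,eq)_k}(abcde)^k =\frac{a\,(q,ab,bc,ac)_\infty}{q\,(a,bq,cq,abc/q)_\infty} \sum_{k=0}^\infty\frac{(q/a,q/b,q/c,de)_k}{(q,q^2/abc,dq,eq)_k}q^k. \]
   Context: For an integer $n$, the $q$-shifted factorial is $(a)_n=(a;q)_n$ with $(a)_0=1$, $(a)_n=(1-a)(1-aq)\cdots(1-aq^{n-1})$ for $n\ge1$, and $(a)_n=[(1-aq^{-1})(1-aq^{-2})\cdots(1-aq^{n})]^{-1}$ for $n\le -1$. Also $(a_1,\ldots,a_m)_n=(a_1)_n\cdots(a_m)_n$ and $(a_1,\ldots,a_m)_\infty=\lim_{n\to\infty}(a_1,\ldots,a_m)_n$. *)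

From Stdlib Require Import Reals ZArith.
From Coquelicot Require Export Coquelicot.

Open Scope C_scope.

Fixpoint cpow (x : C) (n : nat) : C :=
  match n with O => 1 | S m => cpow x m * x end.

Fixpoint prodpos (a q : C) (n : nat) : C :=
  match n with O => 1 | S m => prodpos a q m * (1 - a * cpow q m) end.

Fixpoint prodneg (a q : C) (n : nat) : C :=
  match n with O => 1 | S m => prodneg a q m * (1 - a / cpow q (S m)) end.

Definition qpoch (a q : C) (n : Z) : C :=
  match n with
  | Z0 => 1
  | Zpos p => prodpos a q (Pos.to_nat p)
  | Zneg p => / prodneg a q (Pos.to_nat p)
  end.

(* the reciprocal 1/(a;q)_n, written out without a division for n <= 0
   (so that a vanishing factor of prodneg makes the reciprocal 0, i.e.
   (a;q)_n = infinity, which is how the bilateral series terminates) *)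
Definition qpoch_rec (a q : C) (n : Z) : C :=
  match n with
  | Z0 => 1
  | Zpos p => / prodpos a q (Pos.to_nat p)
  | Zneg p => prodneg a q (Pos.to_nat p)
  end.

Definition qpoch_inf (a q : C) : C :=
  (real (Lim_seq (fun n => fst (prodpos a q n))),
   real (Lim_seq (fun n => snd (prodpos a q n)))).

Definition zpow (x : C) (k : Z) : C :=
  match k with
  | Z0 => 1
  | Zpos p => cpow x (Pos.to_nat p)
  | Zneg p => / cpow x (Pos.to_nat p)
  end.

Definition is_bilateral_series (f : Z -> C) (l : C) : Prop :=
  exists l1 l2 : C,
    is_series (fun n : nat => f (Z.of_nat n)) l1 /\
    is_series (fun n : nat => f (- Z.of_nat (S n))%Z) l2 /\
    l = l1 + l2.

(* When one of a, b, c equals q^(n+1), the bilateral series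
   terminates on both sides, and pairing the terms k and -1-k turns it into a
   terminating very-well-poised sum in a, b, c whose terms carry the factor
   (q/d, q/e)_k (de)^k / (dq, eq)_k.  By the q-Pfaff-Saalschutz summation this
   factor is the image of (de)_j / (dq, eq)_j under the Bailey kernel
   (q^-k, q^(k+1))_j q^j / (q)_j.  After exchanging the two finite sums, the
   inner sums are evaluated in closed form (the very-well-poised terms and the
   balanced terms (q/a, q/b, q/c)_j q^j / (q, q^2/abc)_j form a Bailey pair),
   which leaves the right-hand side multiplied by (q)_(n+1) (bc)_n / (q (bq, cq)_n);
   for a = q^(n+1) this is exactly the infinite-product prefactor.  Every
   finite summation is proved by creative telescoping. *)

From Stdlib Require Import Reals ZArith Lia Lra.
From Coquelicot Require Import Coquelicot.
Open Scope C_scope.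
(* Coquelicot loads ssreflect, which switches bullets off. *)
Set Bullet Behavior "Strict Subproofs".

Lemma C1_neq_0 : (1 : C) <> 0.
Proof. intro H. apply (f_equal fst) in H. simpl in H. lra. Qed.

Lemma one_minus_eq_0 (z : C) : 1 - z = 0 -> z = 1.
Proof. intros H. replace z with (1 - (1 - z)) by ring. rewrite H; ring. Qed.

Lemma cpow_Cpow (x : C) n : cpow x n = x ^ n.
Proof. induction n as [|n IH]; simpl; [reflexivity | rewrite IH; ring]. Qed.

Lemma cpow_add (x : C) m n : cpow x (m + n) = cpow x m * cpow x n.
Proof. rewrite !cpow_Cpow; apply Cpow_add_r. Qed.

Lemma cpow_mul (x y : C) n : cpow (x * y) n = cpow x n * cpow y n.
Proof. rewrite !cpow_Cpow; apply Cpow_mult_l. Qed.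

Lemma cpow_neq_0 (x : C) n : x <> 0 -> cpow x n <> 0.
Proof. rewrite cpow_Cpow; apply Cpow_nz. Qed.

Lemma Cmod_cpow (x : C) n : Cmod (cpow x n) = (Cmod x ^ n)%R.
Proof. rewrite cpow_Cpow; apply Cmod_pow. Qed.

Lemma one_minus_cpow_neq_0 (q : C) n : (Cmod q < 1)%R -> (1 <= n)%nat -> 1 - cpow q n <> 0.
Proof.
  intros Hq Hn E.
  assert (Hlt : (Cmod q ^ n < 1)%R)
    by (apply pow_lt_1_compat; [split; [apply Cmod_ge_0 | exact Hq] | lia]).
  rewrite <- Cmod_cpow, (one_minus_eq_0 _ E), Cmod_1 in Hlt. lra.
Qed.

Lemma one_minus_inv_neq_0 (x : C) : x <> 0 -> 1 - x <> 0 -> 1 - / x <> 0.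
Proof.
  intros H0 H1 E. apply H1. apply one_minus_eq_0 in E.
  replace x with (/ / x) by (field; exact H0). rewrite E. field.
Qed.

Lemma one_minus_inv_cpow_neq_0 (q : C) n :
  q <> 0 -> (Cmod q < 1)%R -> (1 <= n)%nat -> 1 - / cpow q n <> 0.
Proof.
  intros H0 Hq Hn. apply one_minus_inv_neq_0;
    [apply cpow_neq_0, H0 | apply one_minus_cpow_neq_0; assumption].
Qed.

(* Discharges the side conditions left by [field]: each one is a hypothesis
   up to [ring] and sign. *)
Ltac neq0_factor :=
  match goal with
  | |- not (@eq C ?a ?z) =>
      first [ assumption | apply C1_neq_0 | apply cpow_neq_0; assumption
            | match goal with H : not (@eq C ?b z) |- _ =>
                let E := fresh in intro E; apply H;
                first [ transitivity a; [ring | exact E]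
                      | transitivity (- a); [ring | rewrite E; ring] ] end ]
  end.
Ltac neq0 := cbv beta; repeat split; neq0_factor.

Lemma prodpos_S (x q : C) n : prodpos x q (S n) = prodpos x q n * (1 - x * cpow q n).
Proof. reflexivity. Qed.

Lemma prodpos_shift (x q : C) n : prodpos x q (S n) = (1 - x) * prodpos (x * q) q n.
Proof. induction n as [|n IH]; [simpl; ring |]. rewrite prodpos_S, IH. simpl. ring. Qed.

Lemma prodpos_shift_div (x q : C) n : 1 - x <> 0 ->
  prodpos (x * q) q n = prodpos x q n * (1 - x * cpow q n) / (1 - x).
Proof. intros H. rewrite <- prodpos_S, prodpos_shift. field. exact H. Qed.

Lemma prodpos_add (x q : C) m n :
  prodpos x q (m + n) = prodpos x q m * prodpos (x * cpow q m) q n.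
Proof.
  induction n as [|n IH]; [simpl; rewrite Nat.add_0_r; ring |].
  rewrite Nat.add_succ_r, !prodpos_S, IH, cpow_add. ring.
Qed.

Lemma prodpos_neq_0_S (x q : C) n :
  prodpos x q (S n) <> 0 -> prodpos x q n <> 0 /\ 1 - x * cpow q n <> 0.
Proof. rewrite prodpos_S. intros H; split; intro E; apply H; rewrite E; ring. Qed.

Lemma prodpos_eq_0 (x q : C) m n : 1 - x * cpow q m = 0 -> (m < n)%nat -> prodpos x q n = 0.
Proof. intros H Hmn. induction Hmn; rewrite prodpos_S; [rewrite H | rewrite IHHmn]; ring. Qed.

Lemma prodpos_tail_neq_0 (x q : C) n :
  (forall m, prodpos x q m <> 0) -> forall m, prodpos (x * cpow q n) q m <> 0.
Proof. intros H m E. apply (H (n + m)%nat). rewrite prodpos_add, E. ring. Qed.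

Lemma prodpos_cpow_neq_0 (q : C) m n :
  (Cmod q < 1)%R -> (1 <= m)%nat -> prodpos (cpow q m) q n <> 0.
Proof.
  intros Hq Hm. induction n as [|n IH]; [apply C1_neq_0 |].
  rewrite prodpos_S, <- cpow_add. apply Cmult_neq_0; [exact IH |].
  apply one_minus_cpow_neq_0; [exact Hq | lia].
Qed.

Lemma prodpos_q_neq_0 (q : C) n : (Cmod q < 1)%R -> prodpos q q n <> 0.
Proof.
  intros Hq. replace q with (cpow q 1) at 1 by (simpl; ring).
  apply prodpos_cpow_neq_0; [exact Hq | lia].
Qed.

Lemma prodpos_q_div_qpow_eq_0 (q : C) n k :
  q <> 0 -> (n < k)%nat -> prodpos (q / cpow q (S n)) q k = 0.
Proof. intros Hq Hk. apply (prodpos_eq_0 _ _ n k); [simpl; field; neq0 | exact Hk]. Qed.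

Lemma prodneg_qpow_eq_0 (q : C) i m : q <> 0 -> (1 <= i <= m)%nat -> prodneg (cpow q i) q m = 0.
Proof.
  intros Hq [Hi Him]. induction Him as [|m Him IH]; cbn [prodneg].
  - destruct i as [|i]; [lia |]. cbn [prodneg].
    replace (1 - cpow q (S i) / cpow q (S i)) with (RtoC 0) by (field; apply cpow_neq_0, Hq).
    ring.
  - rewrite IH. ring.
Qed.

(* Coquelicot states its [sum_n] lemmas in the carrier of [C_AbelianMonoid] or
   [C_Ring], where [ring] does not apply; these versions are stated in [C]. *)

Lemma sum_n_C_S (f : nat -> C) n : sum_n f (S n) = sum_n f n + f (S n) :> C.
Proof. exact (sum_Sn f n). Qed.

Lemma sum_n_C_ext (f g : nat -> C) n :
  (forall i, (i <= n)%nat -> f i = g i) -> sum_n f n = sum_n g n :> C.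
Proof. exact (sum_n_ext_loc f g n). Qed.

Lemma sum_n_Cplus (f g : nat -> C) n : sum_n (fun i => f i + g i) n = sum_n f n + sum_n g n :> C.
Proof. exact (sum_n_plus f g n). Qed.

Lemma sum_n_Cmult_l (c : C) (f : nat -> C) n : sum_n (fun i => c * f i) n = c * sum_n f n :> C.
Proof. exact (sum_n_mult_l c f n). Qed.

Lemma sum_n_Cmult_r (c : C) (f : nat -> C) n : sum_n (fun i => f i * c) n = sum_n f n * c :> C.
Proof. exact (sum_n_mult_r c f n). Qed.

Lemma sum_n_telescope (f g G : nat -> C) (r : C) n :
  (forall i, (i <= n)%nat -> f i - r * g i = G (S i) - G i) ->
  G O = 0 -> G (S n) = 0 -> sum_n f n = r * sum_n g n :> C.
Proof.
  intros H G0 Gn.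
  assert (E : forall m, (m <= n)%nat -> sum_n f m - r * sum_n g m = G (S m) - G O).
  { induction m as [|m IH]; intros Hm.
    - rewrite !sum_O. apply H; lia.
    - rewrite !sum_n_C_S.
      transitivity ((sum_n f m - r * sum_n g m) + (f (S m) - r * g (S m))); [ring |].
      rewrite IH, H by lia. ring. }
  replace (sum_n f n) with ((sum_n f n - r * sum_n g n) + r * sum_n g n) by ring.
  rewrite E, Gn, G0 by lia. ring.
Qed.

Lemma sum_n_eq_0_tail (f : nat -> C) n m :
  (forall i, (n < i)%nat -> f i = 0) -> (n <= m)%nat -> sum_n f m = sum_n f n :> C.
Proof.
  intros H Hm. induction Hm as [|m Hm IH]; [reflexivity |].
  rewrite sum_n_C_S, IH, H by lia. ring.
Qed.

Lemma is_series_terminating (f : nat -> C) n :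
  (forall i, (n < i)%nat -> f i = 0) -> is_series f (sum_n f n).
Proof.
  intros H. apply (filterlim_ext_loc (fun _ => sum_n f n)); [| apply filterlim_const].
  exists n. intros m Hm. symmetry. apply sum_n_eq_0_tail; assumption.
Qed.

(** * The Bailey kernel and the q-Pfaff-Saalschutz summation *)

Definition bailey_kernel (q : C) (k j : nat) : C :=
  prodpos (/ cpow q k) q j * prodpos (cpow q (S k)) q j * cpow q j / prodpos q q j.

Lemma bailey_kernel_eq_0 (q : C) k j : q <> 0 -> (k < j)%nat -> bailey_kernel q k j = 0.
Proof.
  intros Hq Hkj. unfold bailey_kernel.
  rewrite (prodpos_eq_0 (/ cpow q k) q k j); [unfold Cdiv; ring | | exact Hkj].
  field. apply cpow_neq_0, Hq.
Qed.

Lemma bailey_kernel_0 (q : C) k : bailey_kernel q k 0 = 1.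
Proof. unfold bailey_kernel. simpl. field. Qed.

Definition de_factor (q d e : C) (k : nat) : C :=
  prodpos (q / d) q k * prodpos (q / e) q k * cpow (d * e) k /
  (prodpos (d * q) q k * prodpos (e * q) q k).

Definition de_weight (q d e : C) (j : nat) : C :=
  prodpos (d * e) q j / (prodpos (d * q) q j * prodpos (e * q) q j).

Definition de_factor_ratio (q d e : C) (k : nat) : C :=
  (1 - q / d * cpow q k) * (1 - q / e * cpow q k) * (d * e) /
  ((1 - d * q * cpow q k) * (1 - e * q * cpow q k)).

(* This certificate and the two below come from creative telescoping
   (Zeilberger's algorithm); each certified recurrence is an identity of
   rational functions. *)
Definition saalschutz_cert (q d e : C) (k j : nat) : C :=
  (1 + cpow q k * q) / ((1 - d * (cpow q k * q)) * (1 - e * (cpow q k * q))) *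
  (1 - cpow q j) * (1 - d * cpow q j) * (1 - e * cpow q j) *
  prodpos (/ (cpow q k * q)) q j * prodpos (cpow q k * q) q j * prodpos (d * e) q j /
  ((1 - / (cpow q k * q)) * prodpos q q j * prodpos (d * q) q j * prodpos (e * q) q j).

Section Saalschutz.

Variables q d e : C.
Hypothesis Hq : q <> 0.
Hypothesis Hq1 : (Cmod q < 1)%R.
Hypothesis Hd : d <> 0.
Hypothesis He : e <> 0.
Hypothesis Hdq : forall m, prodpos (d * q) q m <> 0.
Hypothesis Heq : forall m, prodpos (e * q) q m <> 0.

Lemma de_factor_S k : de_factor q d e (S k) = de_factor_ratio q d e k * de_factor q d e k.
Proof.
  destruct (prodpos_neq_0_S _ _ _ (Hdq (S k))) as [Pd Qd].
  destruct (prodpos_neq_0_S _ _ _ (Heq (S k))) as [Pe Qe].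
  unfold de_factor, de_factor_ratio. rewrite !prodpos_S. simpl cpow. field. neq0.
Qed.

Lemma saalschutz_cert_spec k j :
  bailey_kernel q (S k) j * de_weight q d e j
  - de_factor_ratio q d e k * (bailey_kernel q k j * de_weight q d e j)
  = saalschutz_cert q d e k (S j) - saalschutz_cert q d e k j.
Proof.
  destruct (prodpos_neq_0_S _ _ _ (prodpos_q_neq_0 q (S j) Hq1)) as [Pq Qq].
  destruct (prodpos_neq_0_S _ _ _ (Hdq (S j))) as [Pdj Qdj].
  destruct (prodpos_neq_0_S _ _ _ (Heq (S j))) as [Pej Qej].
  destruct (prodpos_neq_0_S _ _ _ (Hdq (S k))) as [_ Qd].
  destruct (prodpos_neq_0_S _ _ _ (Heq (S k))) as [_ Qe].
  assert (HX : cpow q k <> 0) by (apply cpow_neq_0, Hq).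
  assert (HY : cpow q j <> 0) by (apply cpow_neq_0, Hq).
  assert (HXq : 1 - cpow q k * q <> 0)
    by (apply (one_minus_cpow_neq_0 q (S k)); [exact Hq1 | lia]).
  assert (HXqi : 1 - / (cpow q k * q) <> 0)
    by (apply (one_minus_inv_cpow_neq_0 q (S k)); [exact Hq | exact Hq1 | lia]).
  unfold bailey_kernel, de_weight, de_factor_ratio, saalschutz_cert.
  replace (prodpos (/ cpow q k) q j) with
    (prodpos (/ (cpow q k * q)) q j * (1 - / (cpow q k * q) * cpow q j) / (1 - / (cpow q k * q)))
    by (rewrite <- prodpos_shift_div by exact HXqi; f_equal; field; neq0).
  replace (prodpos (cpow q (S (S k))) q j) with
    (prodpos (cpow q k * q) q j * (1 - cpow q k * q * cpow q j) / (1 - cpow q k * q))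
    by (rewrite <- prodpos_shift_div by exact HXq; reflexivity).
  rewrite !prodpos_S. simpl cpow. field. neq0.
Qed.

Lemma saalschutz_cert_0 k : saalschutz_cert q d e k 0 = 0.
Proof. unfold saalschutz_cert. simpl cpow. unfold Cdiv. ring. Qed.

Lemma saalschutz_cert_end k : saalschutz_cert q d e k (S (S k)) = 0.
Proof.
  unfold saalschutz_cert.
  rewrite (prodpos_eq_0 (/ (cpow q k * q)) q (S k) (S (S k))); [unfold Cdiv; ring | | lia].
  simpl cpow. field. split; [exact Hq | apply cpow_neq_0, Hq].
Qed.

(* The terminating q-Pfaff-Saalschutz summation, read as an expansion of
   [de_factor] in the Bailey kernel. *)
Lemma de_factor_expansion k :
  de_factor q d e k = sum_n (fun j => bailey_kernel q k j * de_weight q d e j) k :> C.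
Proof.
  induction k as [|k IH].
  - rewrite sum_O. unfold de_factor, bailey_kernel, de_weight. simpl. field.
  - rewrite de_factor_S, IH.
    rewrite (sum_n_telescope (fun j => bailey_kernel q (S k) j * de_weight q d e j)
               (fun j => bailey_kernel q k j * de_weight q d e j)
               (saalschutz_cert q d e k) (de_factor_ratio q d e k) (S k)).
    + rewrite sum_n_C_S, bailey_kernel_eq_0 by (exact Hq || lia). ring.
    + intros i _. apply saalschutz_cert_spec.
    + apply saalschutz_cert_0.
    + apply saalschutz_cert_end.
Qed.

End Saalschutz.

(** * A terminating very-well-poised summation and a Bailey pair *)

Definition vwp_term (q a b c : C) (k : nat) : C :=
  (1 - cpow q k * cpow q k * q) / cpow q (S k) *
  prodpos (q / a) q k * prodpos (q / b) q k * prodpos (q / c) q k * cpow (a * b * c) k /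
  (prodpos (a * q) q k * prodpos (b * q) q k * prodpos (c * q) q k).

Definition balanced_term (q a b c : C) (j : nat) : C :=
  prodpos (q / a) q j * prodpos (q / b) q j * prodpos (q / c) q j * cpow q j /
  (prodpos q q j * prodpos (q * q / (a * b * c)) q j).

Definition vwp_sum (q b c : C) (n : nat) : C :=
  prodpos q q (S n) * prodpos (b * c) q n / (q * prodpos (b * q) q n * prodpos (c * q) q n).

Definition vwp_ratio (q a b c : C) : C :=
  (1 - a * q) * (1 - b * c * (a / q)) / ((1 - b * a) * (1 - c * a)).

Definition vwp_cert (q a b c : C) (k : nat) : C :=
  - (1 - a * q) / ((1 - b * a) * (1 - c * a)) / (1 - / a) *
  (1 - b * cpow q k) * (1 - c * cpow q k) * (1 - / cpow q k) / q *
  prodpos (q / (a * q)) q k * prodpos (q / b) q k * prodpos (q / c) q k * cpow (a * b * c) k /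
  (prodpos (a * q) q k * prodpos (b * q) q k * prodpos (c * q) q k).

Definition bailey_ratio (q a b c : C) (j : nat) : C :=
  (1 - q / a * cpow q j) * (1 - q / b * cpow q j) * (1 - q / c * cpow q j) * q /
  ((1 - q * cpow q j) * (1 - q * q / (a * b * c) * cpow q j)).

Definition bailey_cert (q a b c : C) (j k : nat) : C :=
  cpow q j * q * q * q /
  (a * b * c * (1 - cpow q j * q) * (1 - cpow q j * q * q / (a * b * c))) / cpow q (S k) *
  prodpos (q / a) q k * prodpos (q / b) q k * prodpos (q / c) q k * cpow (a * b * c) k *
  (1 - a * cpow q k) * (1 - b * cpow q k) * (1 - c * cpow q k) /
  (prodpos (a * q) q k * prodpos (b * q) q k * prodpos (c * q) q k) *
  bailey_kernel q k j * (1 - cpow q j / cpow q k).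

Section VeryWellPoised.

Variables q b c : C.
Hypothesis Hq : q <> 0.
Hypothesis Hq1 : (Cmod q < 1)%R.
Hypothesis Hb : b <> 0.
Hypothesis Hc : c <> 0.
Hypothesis Hbq : forall m, prodpos (b * q) q m <> 0.
Hypothesis Hcq : forall m, prodpos (c * q) q m <> 0.

Lemma vwp_cert_spec (a : C) k :
  a <> 0 -> 1 - a <> 0 -> 1 - a * q <> 0 -> 1 - b * a <> 0 -> 1 - c * a <> 0 ->
  prodpos (a * q) q (S k) <> 0 ->
  vwp_term q (a * q) b c k - vwp_ratio q a b c * vwp_term q a b c k
  = vwp_cert q a b c (S k) - vwp_cert q a b c k.
Proof.
  intros Ha Ha1 Haq Hba Hca Haqk.
  destruct (prodpos_neq_0_S _ _ _ Haqk) as [Pa Qa].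
  destruct (prodpos_neq_0_S _ _ _ (Hbq (S k))) as [Pb Qb].
  destruct (prodpos_neq_0_S _ _ _ (Hcq (S k))) as [Pc Qc].
  assert (HX : cpow q k <> 0) by (apply cpow_neq_0, Hq).
  assert (Hai : 1 - / a <> 0) by (apply one_minus_inv_neq_0; assumption).
  assert (Hai' : 1 - q / (a * q) <> 0) by (intro E; apply Hai; rewrite <- E; field; neq0).
  unfold vwp_cert, vwp_term, vwp_ratio.
  replace (prodpos (q / a) q k) with
    (prodpos (q / (a * q)) q k * (1 - q / (a * q) * cpow q k) / (1 - q / (a * q)))
    by (rewrite <- prodpos_shift_div by exact Hai'; f_equal; field; neq0).
  replace (prodpos (a * q * q) q k) with
    (prodpos (a * q) q k * (1 - a * q * cpow q k) / (1 - a * q))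
    by (rewrite <- prodpos_shift_div by exact Haq; reflexivity).
  replace (cpow (a * q * b * c) k) with (cpow (a * b * c) k * cpow q k)
    by (rewrite <- cpow_mul; f_equal; ring).
  rewrite !prodpos_S. simpl cpow. field. neq0.
Qed.

Lemma vwp_term_qpow_end n : vwp_term q (cpow q (S n)) b c (S n) = 0.
Proof.
  unfold vwp_term.
  rewrite (prodpos_eq_0 (q / cpow q (S n)) q n (S n)); [unfold Cdiv; ring | | lia].
  simpl cpow. field. neq0.
Qed.

Lemma vwp_summation n : sum_n (vwp_term q (cpow q (S n)) b c) n = vwp_sum q b c n :> C.
Proof.
  induction n as [|n IH].
  - rewrite sum_O. unfold vwp_term, vwp_sum. simpl. field. neq0.
  - set (a := cpow q (S n)).
    assert (Ha : a <> 0) by (apply cpow_neq_0, Hq).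
    assert (Ha1 : 1 - a <> 0) by (apply one_minus_cpow_neq_0; [exact Hq1 | lia]).
    assert (Haq : 1 - a * q <> 0)
      by (apply (one_minus_cpow_neq_0 q (S (S n))); [exact Hq1 | lia]).
    destruct (prodpos_neq_0_S _ _ _ (Hbq (S n))) as [Pb Qb].
    destruct (prodpos_neq_0_S _ _ _ (Hcq (S n))) as [Pc Qc].
    destruct (prodpos_neq_0_S _ _ _ (prodpos_q_neq_0 q (S n) Hq1)) as [Pq _].
    assert (Hba : 1 - b * a <> 0) by (intro E; apply Qb; rewrite <- E; unfold a; simpl; ring).
    assert (Hca : 1 - c * a <> 0) by (intro E; apply Qc; rewrite <- E; unfold a; simpl; ring).
    change (cpow q (S (S n))) with (a * q).
    rewrite (sum_n_telescope (vwp_term q (a * q) b c) (vwp_term q a b c)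
               (vwp_cert q a b c) (vwp_ratio q a b c) (S n)).
    + rewrite sum_n_C_S. unfold a at 2 3. rewrite vwp_term_qpow_end, IH.
      unfold vwp_ratio, vwp_sum. rewrite !prodpos_S. unfold a. simpl cpow. field. neq0.
    + intros k _. apply vwp_cert_spec; try assumption.
      apply (prodpos_cpow_neq_0 q (S (S n))); [exact Hq1 | lia].
    + unfold vwp_cert. simpl cpow. replace (1 - / 1) with (RtoC 0) by field. unfold Cdiv. ring.
    + unfold vwp_cert.
      rewrite (prodpos_eq_0 (q / (a * q)) q (S n) (S (S n))); [unfold Cdiv; ring | | lia].
      unfold a. simpl cpow. field. neq0.
Qed.

Lemma bailey_cert_spec (a : C) j k :
  a <> 0 -> prodpos (q * q / (a * b * c)) q (S j) <> 0 -> prodpos (a * q) q (S k) <> 0 ->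
  vwp_term q a b c k * bailey_kernel q k (S j)
  - bailey_ratio q a b c j * (vwp_term q a b c k * bailey_kernel q k j)
  = bailey_cert q a b c j (S k) - bailey_cert q a b c j k.
Proof.
  intros Ha Habc Haqk.
  destruct (prodpos_neq_0_S _ _ _ (prodpos_q_neq_0 q (S j) Hq1)) as [Pq Qq].
  destruct (prodpos_neq_0_S _ _ _ Habc) as [Pabc Qabc].
  destruct (prodpos_neq_0_S _ _ _ Haqk) as [Pa Qa].
  destruct (prodpos_neq_0_S _ _ _ (Hbq (S k))) as [Pb Qb].
  destruct (prodpos_neq_0_S _ _ _ (Hcq (S k))) as [Pc Qc].
  assert (HX : cpow q k <> 0) by (apply cpow_neq_0, Hq).
  assert (HY : cpow q j <> 0) by (apply cpow_neq_0, Hq).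
  assert (HXq : 1 - cpow q k * q <> 0)
    by (apply (one_minus_cpow_neq_0 q (S k)); [exact Hq1 | lia]).
  assert (HXqi : 1 - / (cpow q k * q) <> 0)
    by (apply (one_minus_inv_cpow_neq_0 q (S k)); [exact Hq | exact Hq1 | lia]).
  assert (HYq : 1 - cpow q j * q <> 0) by (intro E; apply Qq; rewrite <- E; ring).
  assert (HYq2 : 1 - cpow q j * q * q / (a * b * c) <> 0)
    by (intro E; apply Qabc; rewrite <- E; field; neq0).
  assert (Habcj : a * b * c - cpow q j * q * q <> 0).
  { intro E; apply HYq2.
    replace (1 - cpow q j * q * q / (a * b * c))
      with ((a * b * c - cpow q j * q * q) / (a * b * c)) by (field; neq0).
    rewrite E. unfold Cdiv. ring. }
  unfold bailey_cert, vwp_term, bailey_kernel, bailey_ratio.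
  replace (prodpos (cpow q (S (S k))) q j) with
    (prodpos (cpow q k * q) q j * (1 - cpow q k * q * cpow q j) / (1 - cpow q k * q))
    by (rewrite <- prodpos_shift_div by exact HXq; reflexivity).
  rewrite !prodpos_S. simpl cpow.
  replace (prodpos (/ cpow q k) q j) with
    (prodpos (/ (cpow q k * q)) q j * (1 - / (cpow q k * q) * cpow q j) / (1 - / (cpow q k * q)))
    by (rewrite <- prodpos_shift_div by exact HXqi; f_equal; field; neq0).
  field. neq0.
Qed.

Lemma bailey_cert_0 (a : C) j : bailey_cert q a b c j 0 = 0.
Proof.
  unfold bailey_cert. destruct j.
  - simpl cpow. replace (1 - 1 / 1) with (RtoC 0) by field. unfold Cdiv. ring.
  - rewrite bailey_kernel_eq_0 by (exact Hq || lia). unfold Cdiv. ring.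
Qed.

Lemma bailey_cert_qpow_end n j : bailey_cert q (cpow q (S n)) b c j (S n) = 0.
Proof.
  unfold bailey_cert.
  rewrite (prodpos_eq_0 (q / cpow q (S n)) q n (S n)); [unfold Cdiv; ring | | lia].
  simpl cpow. field. neq0.
Qed.

Lemma vwp_kernel_sum n j :
  (forall m, prodpos (q * q / (cpow q (S n) * b * c)) q m <> 0) ->
  sum_n (fun k => vwp_term q (cpow q (S n)) b c k * bailey_kernel q k j) n
  = vwp_sum q b c n * balanced_term q (cpow q (S n)) b c j :> C.
Proof.
  intros Habc. set (a := cpow q (S n)) in *.
  assert (Ha : a <> 0) by (apply cpow_neq_0, Hq).
  induction j as [|j IH].
  - rewrite (sum_n_C_ext _ (vwp_term q a b c)) by (intros k _; rewrite bailey_kernel_0; ring).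
    unfold a. rewrite vwp_summation. unfold balanced_term. simpl. field.
  - rewrite (sum_n_telescope (fun k => vwp_term q a b c k * bailey_kernel q k (S j))
               (fun k => vwp_term q a b c k * bailey_kernel q k j)
               (bailey_cert q a b c j) (bailey_ratio q a b c j) n).
    + rewrite IH. unfold bailey_ratio, balanced_term. rewrite !prodpos_S.
      destruct (prodpos_neq_0_S _ _ _ (Habc (S j))) as [Pabc Qabc].
      destruct (prodpos_neq_0_S _ _ _ (prodpos_q_neq_0 q (S j) Hq1)) as [Pq Qq].
      assert (Pb := Hbq n). assert (Pc := Hcq n).
      assert (Habcj : cpow q n * b * c - q * cpow q j <> 0).
      { intro E; apply Qabc.
        replace (1 - q * q / (a * b * c) * cpow q j)
          with ((cpow q n * b * c - q * cpow q j) / (cpow q n * b * c))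
          by (unfold a; simpl; field; neq0).
        rewrite E. unfold Cdiv. ring. }
      unfold vwp_sum, a in *. simpl cpow in *. field. neq0.
    + intros k _. apply bailey_cert_spec; [exact Ha | apply Habc |].
      apply (prodpos_cpow_neq_0 q (S (S n))); [exact Hq1 | lia].
    + apply bailey_cert_0.
    + apply bailey_cert_qpow_end.
Qed.

Lemma vwp_de_transform n (d e : C) :
  d <> 0 -> e <> 0 ->
  (forall m, prodpos (d * q) q m <> 0) -> (forall m, prodpos (e * q) q m <> 0) ->
  (forall m, prodpos (q * q / (cpow q (S n) * b * c)) q m <> 0) ->
  sum_n (fun k => vwp_term q (cpow q (S n)) b c k * de_factor q d e k) n
  = vwp_sum q b c n *
    sum_n (fun j => balanced_term q (cpow q (S n)) b c j * de_weight q d e j) n :> C.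
Proof.
  intros Hd He Hdq Heq Habc. set (a := cpow q (S n)).
  transitivity (sum_n (fun k => sum_n (fun j =>
                  vwp_term q a b c k * (bailey_kernel q k j * de_weight q d e j)) n) n).
  - apply sum_n_C_ext. intros k Hk.
    rewrite de_factor_expansion, sum_n_Cmult_l by assumption. f_equal. symmetry.
    apply sum_n_eq_0_tail; [| exact Hk].
    intros i Hi. rewrite bailey_kernel_eq_0 by assumption. ring.
  - rewrite sum_n_switch, <- sum_n_Cmult_l. apply sum_n_C_ext. intros j _.
    transitivity (sum_n (fun k => vwp_term q a b c k * bailey_kernel q k j) n * de_weight q d e j).
    + rewrite <- sum_n_Cmult_r. apply sum_n_C_ext. intros k _. ring.
    + unfold a. rewrite vwp_kernel_sum by exact Habc. ring.
Qed.

End VeryWellPoised.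

(** * Infinite products *)

Lemma Cmod_1_minus_le (z : C) : (Cmod (1 - z) <= 1 + Cmod z)%R.
Proof. unfold Cminus. eapply Rle_trans; [apply Cmod_triangle |]. rewrite Cmod_opp, Cmod_1. lra. Qed.

Lemma Cmod_1_minus_ge (z : C) : (1 - Cmod z <= Cmod (1 - z))%R.
Proof.
  assert (H := Cmod_triangle (1 - z) z). replace (1 - z + z) with (RtoC 1) in H by ring.
  rewrite Cmod_1 in H. lra.
Qed.

Lemma exp_le_compat (x y : R) : (x <= y)%R -> (exp x <= exp y)%R.
Proof. intros [H | ->]; [apply Rlt_le, exp_increasing, H | apply Rle_refl]. Qed.

Lemma prodpos_Cmod_le (q x : C) N : (Cmod q < 1)%R ->
  (Cmod (prodpos x q N) <= exp (Cmod x / (1 - Cmod q)))%R.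
Proof.
  intros Hq. assert (H0 := Cmod_ge_0 q). assert (Hx := Cmod_ge_0 x).
  assert (HN : (Cmod (prodpos x q N) <= exp (Cmod x * (1 - Cmod q ^ N) / (1 - Cmod q)))%R).
  { induction N as [|N IH].
    - simpl. rewrite Cmod_1. replace (Cmod x * (1 - 1) / (1 - Cmod q))%R with 0%R by (field; lra).
      rewrite exp_0. lra.
    - rewrite prodpos_S, Cmod_mult.
      replace (Cmod x * (1 - Cmod q ^ S N) / (1 - Cmod q))%R with
        (Cmod x * (1 - Cmod q ^ N) / (1 - Cmod q) + Cmod x * Cmod q ^ N)%R by (simpl; field; lra).
      rewrite exp_plus. apply Rmult_le_compat; [apply Cmod_ge_0 | apply Cmod_ge_0 | exact IH |].
      eapply Rle_trans; [apply Cmod_1_minus_le |]. rewrite Cmod_mult, Cmod_cpow.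
      apply exp_ineq1_le. }
  eapply Rle_trans; [exact HN |]. apply exp_le_compat.
  assert (HqN : (0 <= Cmod q ^ N)%R) by (apply pow_le; exact H0).
  unfold Rdiv. apply Rmult_le_compat_r; [apply Rlt_le, Rinv_0_lt_compat; lra | nra].
Qed.

Lemma prodpos_Cmod_ge (q y : C) N : (Cmod q < 1)%R -> (Cmod y <= 1)%R ->
  (1 - Cmod y * (1 - Cmod q ^ N) / (1 - Cmod q) <= Cmod (prodpos y q N))%R.
Proof.
  intros Hq Hy. assert (Hr := Cmod_ge_0 q). assert (Hs := Cmod_ge_0 y).
  induction N as [|N IH].
  - simpl. rewrite Cmod_1.
    replace (Cmod y * (1 - 1) / (1 - Cmod q))%R with 0%R by (field; lra). lra.
  - rewrite prodpos_S, Cmod_mult.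
    assert (HrN : (0 <= Cmod q ^ N <= 1)%R).
    { destruct N; [simpl; lra |].
      assert (H := pow_lt_1_compat (Cmod q) (S N) (conj Hr Hq) (Nat.lt_0_succ N)). lra. }
    assert (Hf : (1 - Cmod y * Cmod q ^ N <= Cmod (1 - y * cpow q N))%R).
    { eapply Rle_trans; [| apply Cmod_1_minus_ge]. rewrite Cmod_mult, Cmod_cpow. lra. }
    set (A := (1 - Cmod y * (1 - Cmod q ^ N) / (1 - Cmod q))%R) in *.
    replace (1 - Cmod y * (1 - Cmod q ^ S N) / (1 - Cmod q))%R with (A - Cmod y * Cmod q ^ N)%R
      by (unfold A; simpl; field; lra).
    assert (HA1 : (A <= 1)%R).
    { unfold A. enough (0 <= Cmod y * (1 - Cmod q ^ N) / (1 - Cmod q))%R by lra.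
      apply Rmult_le_pos; [apply Rmult_le_pos; lra | apply Rlt_le, Rinv_0_lt_compat; lra]. }
    assert (Hp := Cmod_ge_0 (prodpos y q N)).
    set (t := Cmod (prodpos y q N)) in *. set (f := Cmod (1 - y * cpow q N)) in *.
    set (w := (Cmod y * Cmod q ^ N)%R) in *.
    assert (Hw : (0 <= w <= 1)%R).
    { unfold w. split; [apply Rmult_le_pos; lra |].
      rewrite <- (Rmult_1_r 1). apply Rmult_le_compat; lra. }
    destruct (Rle_or_lt 0 A).
    + assert (0 <= (t - A) * f)%R by (apply Rmult_le_pos; lra).
      assert (0 <= A * (f - (1 - w)))%R by (apply Rmult_le_pos; lra).
      assert (0 <= (1 - A) * w)%R by (apply Rmult_le_pos; lra).
      nra.
    + assert (0 <= t * f)%R by (apply Rmult_le_pos; lra). lra.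
Qed.

Lemma is_lim_seq_of_geometric_increments (u : nat -> R) (K r : R) : (0 <= r < 1)%R ->
  (forall i, Rabs (u (S i) - u i) <= K * r ^ i)%R -> exists l : R, is_lim_seq u l.
Proof.
  intros Hr Hu.
  set (a := fun i => (u (S i) - u i)%R).
  assert (Ha : ex_series a).
  { apply (@ex_series_le R_AbsRing R_CompleteNormedModule a (fun i => K * r ^ i)%R);
      [intros n; apply Hu |].
    exists (K * / (1 - r))%R. apply (is_series_scal_l K (fun n => (r ^ n)%R)).
    apply is_series_geom. rewrite Rabs_pos_eq; lra. }
  destruct Ha as [l Hl]. exists (l + u O)%R.
  apply is_lim_seq_incr_1.
  assert (Hs : forall N, sum_n a N = (u (S N) - u O)%R).
  { induction N as [|N IH]; [apply sum_O |]. rewrite sum_Sn, IH. unfold a, plus; simpl. ring. }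
  apply (is_lim_seq_ext (fun N => sum_n a N + u O)%R); [intros N; rewrite Hs; ring |].
  apply is_lim_seq_plus'; [exact Hl | apply is_lim_seq_const].
Qed.

Definition is_lim_seq_C (u : nat -> C) (L : C) : Prop :=
  is_lim_seq (fun n => fst (u n)) (fst L) /\ is_lim_seq (fun n => snd (u n)) (snd L).

Lemma is_lim_seq_C_unique (u : nat -> C) L1 L2 : is_lim_seq_C u L1 -> is_lim_seq_C u L2 -> L1 = L2.
Proof.
  intros [H1 H2] [H3 H4].
  assert (E1 := is_lim_seq_unique _ _ H1). rewrite (is_lim_seq_unique _ _ H3) in E1.
  assert (E2 := is_lim_seq_unique _ _ H2). rewrite (is_lim_seq_unique _ _ H4) in E2.
  injection E1; injection E2; intros. destruct L1, L2; simpl in *; subst; reflexivity.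
Qed.

Lemma is_lim_seq_C_scal_l (u : nat -> C) (z L : C) :
  is_lim_seq_C u L -> is_lim_seq_C (fun n => z * u n) (z * L).
Proof.
  intros [H1 H2]. split; simpl.
  - apply is_lim_seq_minus'; apply is_lim_seq_mult'; try assumption; apply is_lim_seq_const.
  - apply is_lim_seq_plus'; apply is_lim_seq_mult'; try assumption; apply is_lim_seq_const.
Qed.

Lemma is_lim_seq_C_incr_n (u : nat -> C) L m :
  is_lim_seq_C u L -> is_lim_seq_C (fun n => u (m + n)%nat) L.
Proof.
  intros [H1 H2].
  apply (is_lim_seq_incr_n _ m) in H1. apply (is_lim_seq_incr_n _ m) in H2.
  split; eapply is_lim_seq_ext; [| exact H1 | | exact H2];
    intros n; simpl; rewrite Nat.add_comm; reflexivity.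
Qed.

Lemma is_lim_seq_C_neq_0 (u : nat -> C) L :
  is_lim_seq_C u L -> (forall n, / 2 <= Cmod (u n))%R -> L <> 0.
Proof.
  intros [H1 H2] Hb HL. subst L. simpl in H1, H2.
  apply is_lim_seq_spec in H1. apply is_lim_seq_spec in H2.
  assert (He : (0 < / 4)%R) by lra.
  destruct (H1 (mkposreal _ He)) as [N1 HN1].
  destruct (H2 (mkposreal _ He)) as [N2 HN2].
  specialize (HN1 (N1 + N2)%nat ltac:(lia)). specialize (HN2 (N1 + N2)%nat ltac:(lia)).
  simpl in HN1, HN2. rewrite Rminus_0_r in HN1, HN2.
  set (v := u (N1 + N2)%nat) in *.
  assert (Hm := Cmod_2Rmax v).
  assert (Hs : (sqrt 2 < 2)%R) by (apply sqrt_less; lra).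
  assert (Hmax : (Rmax (Rabs (fst v)) (Rabs (snd v)) < / 4)%R) by (apply Rmax_lub_lt; assumption).
  assert (Hpos := Rlt_sqrt2_0).
  assert (Hmax0 : (0 <= Rmax (Rabs (fst v)) (Rabs (snd v)))%R)
    by (eapply Rle_trans; [apply Rabs_pos | apply Rmax_l]).
  specialize (Hb (N1 + N2)%nat). fold v in Hb. nra.
Qed.

Section InfiniteProducts.

Variable q : C.
Hypothesis Hq1 : (Cmod q < 1)%R.

Lemma prodpos_cvg (x : C) : exists L, is_lim_seq_C (prodpos x q) L.
Proof.
  set (M := exp (Cmod x / (1 - Cmod q))).
  assert (Hd : forall i,
             (Cmod (prodpos x q (S i) - prodpos x q i) <= (M * Cmod x) * Cmod q ^ i)%R).
  { intros i.
    replace (prodpos x q (S i) - prodpos x q i) with (- (prodpos x q i * (x * cpow q i)))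
      by (rewrite prodpos_S; ring).
    rewrite Cmod_opp, !Cmod_mult, Cmod_cpow, Rmult_assoc.
    apply Rmult_le_compat_r; [apply Rmult_le_pos; [apply Cmod_ge_0 | apply pow_le, Cmod_ge_0] |].
    apply prodpos_Cmod_le, Hq1. }
  assert (Hr : (0 <= Cmod q < 1)%R) by (split; [apply Cmod_ge_0 | exact Hq1]).
  destruct (is_lim_seq_of_geometric_increments
              (fun n => fst (prodpos x q n)) (M * Cmod x) (Cmod q) Hr)
    as [l1 H1].
  { intros i. eapply Rle_trans; [| apply (Hd i)].
    eapply Rle_trans; [| apply Rmax_Cmod]. apply Rmax_l. }
  destruct (is_lim_seq_of_geometric_increments
              (fun n => snd (prodpos x q n)) (M * Cmod x) (Cmod q) Hr)
    as [l2 H2].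
  { intros i. eapply Rle_trans; [| apply (Hd i)].
    eapply Rle_trans; [| apply Rmax_Cmod]. apply Rmax_r. }
  exists (l1, l2). split; assumption.
Qed.

Lemma qpoch_inf_is_lim (x L : C) : is_lim_seq_C (prodpos x q) L -> qpoch_inf x q = L.
Proof.
  intros [H1 H2]. unfold qpoch_inf.
  rewrite (is_lim_seq_unique _ _ H1), (is_lim_seq_unique _ _ H2). destruct L; reflexivity.
Qed.

Lemma qpoch_inf_shift (x : C) m : qpoch_inf x q = prodpos x q m * qpoch_inf (x * cpow q m) q.
Proof.
  destruct (prodpos_cvg x) as [L HL].
  destruct (prodpos_cvg (x * cpow q m)) as [L' HL'].
  rewrite (qpoch_inf_is_lim _ _ HL), (qpoch_inf_is_lim _ _ HL').
  apply (is_lim_seq_C_unique (fun n => prodpos x q (m + n))); [apply is_lim_seq_C_incr_n, HL |].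
  destruct (is_lim_seq_C_scal_l _ (prodpos x q m) _ HL') as [A1 A2].
  split; eapply is_lim_seq_ext; [| exact A1 | | exact A2];
    intros n; simpl; rewrite prodpos_add; reflexivity.
Qed.

Lemma qpoch_inf_neq_0 (x : C) : (forall m, prodpos x q m <> 0) -> qpoch_inf x q <> 0.
Proof.
  intros Hx.
  assert (Hr := Cmod_ge_0 q). assert (Hs := Cmod_ge_0 x).
  assert (Heps : (0 < (1 - Cmod q) / (2 * (Cmod x + 1)))%R) by (apply Rdiv_lt_0_compat; lra).
  destruct (pow_lt_1_zero (Cmod q) ltac:(rewrite Rabs_pos_eq; lra) _ Heps) as [N0 HN0].
  specialize (HN0 N0 (le_n _)). rewrite Rabs_pos_eq in HN0 by (apply pow_le; lra).
  set (y := x * cpow q N0).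
  assert (Hy : (Cmod y <= (1 - Cmod q) / 2)%R).
  { unfold y. rewrite Cmod_mult, Cmod_cpow.
    apply Rlt_le, (Rmult_le_compat_l (Cmod x)) in HN0; [| exact Hs].
    eapply Rle_trans; [exact HN0 |].
    unfold Rdiv. rewrite Rinv_mult.
    assert (Hinv : (0 < / (Cmod x + 1))%R) by (apply Rinv_0_lt_compat; lra).
    assert (Hfrac : (Cmod x * / (Cmod x + 1) <= 1)%R).
    { apply (Rmult_le_reg_r (Cmod x + 1)); [lra |]. rewrite Rmult_assoc, Rinv_l by lra. lra. }
    replace (Cmod x * ((1 - Cmod q) * (/ 2 * / (Cmod x + 1))))%R
      with ((Cmod x * / (Cmod x + 1)) * ((1 - Cmod q) * / 2))%R by ring.
    assert (0 <= (1 - Cmod q) * / 2)%R by lra. nra. }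
  rewrite (qpoch_inf_shift x N0). fold y.
  apply Cmult_neq_0; [apply Hx |].
  destruct (prodpos_cvg y) as [L HL].
  rewrite (qpoch_inf_is_lim _ _ HL).
  apply (is_lim_seq_C_neq_0 _ _ HL).
  intros n. eapply Rle_trans; [| apply prodpos_Cmod_ge; [exact Hq1 | lra]].
  assert (HrN : (0 <= Cmod q ^ n)%R) by (apply pow_le; lra).
  assert (Cmod y * (1 - Cmod q ^ n) / (1 - Cmod q) <= / 2)%R.
  { apply (Rmult_le_reg_r (1 - Cmod q)); [lra |].
    unfold Rdiv. rewrite Rmult_assoc, Rinv_l by lra. assert (Hy0 := Cmod_ge_0 y). nra. }
  lra.
Qed.

End InfiniteProducts.

(** * The transformation for terminating series *)

(* Symmetric in a, b, c; the prefactor of the statement is a/(1-a) times it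
   ([qpoch_inf_prefactor]), so the three cases reduce to a = q^(n+1). *)
Definition prefactor (q a b c : C) : C :=
  qpoch_inf q q * qpoch_inf (a * b) q * qpoch_inf (b * c) q * qpoch_inf (a * c) q /
  (q * (qpoch_inf (a * q) q * qpoch_inf (b * q) q * qpoch_inf (c * q) q *
        qpoch_inf (a * b * c / q) q)).

Lemma prefactor_swap (q a b c : C) : prefactor q b a c = prefactor q a b c.
Proof.
  unfold prefactor.
  replace (b * a) with (a * b) by ring.
  replace (qpoch_inf (b * q) q * qpoch_inf (a * q) q * qpoch_inf (c * q) q)
    with (qpoch_inf (a * q) q * qpoch_inf (b * q) q * qpoch_inf (c * q) q) by ring.
  unfold Cdiv. ring.
Qed.

Lemma prefactor_rot (q a b c : C) : prefactor q c a b = prefactor q a b c.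
Proof.
  unfold prefactor.
  replace (c * a) with (a * c) by ring. replace (c * b) with (b * c) by ring.
  replace (a * c * b / q) with (a * b * c / q) by (unfold Cdiv; ring).
  replace (qpoch_inf (c * q) q * qpoch_inf (a * q) q * qpoch_inf (b * q) q)
    with (qpoch_inf (a * q) q * qpoch_inf (b * q) q * qpoch_inf (c * q) q) by ring.
  unfold Cdiv. ring.
Qed.

Lemma prefactor_qpow (q a b c : C) n :
  q <> 0 -> (Cmod q < 1)%R -> a = cpow q (S n) ->
  (forall m, prodpos (b * q) q m <> 0) -> (forall m, prodpos (c * q) q m <> 0) ->
  (forall m, prodpos (a * b * c / q) q m <> 0) ->
  prefactor q a b c = vwp_sum q b c n.
Proof.
  intros Hq Hq1 Ha Hbq Hcq Habc.
  unfold prefactor, vwp_sum.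
  rewrite (qpoch_inf_shift q Hq1 q (S n)), (qpoch_inf_shift q Hq1 (b * q) n),
    (qpoch_inf_shift q Hq1 (c * q) n), (qpoch_inf_shift q Hq1 (b * c) n).
  replace (a * b * c / q) with (b * c * cpow q n) in * by (rewrite Ha; simpl; field; exact Hq).
  replace (a * q) with (q * cpow q (S n)) by (rewrite Ha; ring).
  replace (a * b) with (b * q * cpow q n) by (rewrite Ha; simpl; ring).
  replace (a * c) with (c * q * cpow q n) by (rewrite Ha; simpl; ring).
  assert (Zq : qpoch_inf (q * cpow q (S n)) q <> 0)
    by (apply qpoch_inf_neq_0, prodpos_tail_neq_0;
        [exact Hq1 | intros m; apply prodpos_q_neq_0, Hq1]).
  assert (Zb : qpoch_inf (b * q * cpow q n) q <> 0)
    by (apply qpoch_inf_neq_0, prodpos_tail_neq_0; assumption).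
  assert (Zc : qpoch_inf (c * q * cpow q n) q <> 0)
    by (apply qpoch_inf_neq_0, prodpos_tail_neq_0; assumption).
  assert (Zbc : qpoch_inf (b * c * cpow q n) q <> 0) by (apply qpoch_inf_neq_0; assumption).
  assert (Pb := Hbq n). assert (Pc := Hcq n).
  field. neq0.
Qed.

Lemma qpoch_inf_prefactor (q a b c : C) :
  q <> 0 -> (Cmod q < 1)%R -> 1 - a <> 0 ->
  (forall m, prodpos (a * q) q m <> 0) -> (forall m, prodpos (b * q) q m <> 0) ->
  (forall m, prodpos (c * q) q m <> 0) -> (forall m, prodpos (a * b * c / q) q m <> 0) ->
  a * (qpoch_inf q q * qpoch_inf (a * b) q * qpoch_inf (b * c) q * qpoch_inf (a * c) q)
  / (q * (qpoch_inf a q * qpoch_inf (b * q) q * qpoch_inf (c * q) q *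
          qpoch_inf (a * b * c / q) q))
  = a / (1 - a) * prefactor q a b c.
Proof.
  intros Hq Hq1 Ha1 Haq Hbq Hcq Habc.
  unfold prefactor. rewrite (qpoch_inf_shift q Hq1 a 1).
  replace (a * cpow q 1) with (a * q) by (simpl; ring). simpl prodpos.
  assert (Za := qpoch_inf_neq_0 q Hq1 _ Haq).
  assert (Zb := qpoch_inf_neq_0 q Hq1 _ Hbq).
  assert (Zc := qpoch_inf_neq_0 q Hq1 _ Hcq).
  assert (Zabc := qpoch_inf_neq_0 q Hq1 _ Habc).
  field. neq0.
Qed.

Lemma vwp_term_swap (q a b c : C) k : vwp_term q b a c k = vwp_term q a b c k.
Proof.
  unfold vwp_term. replace (b * a * c) with (a * b * c) by ring.
  replace (prodpos (b * q) q k * prodpos (a * q) q k * prodpos (c * q) q k)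
    with (prodpos (a * q) q k * prodpos (b * q) q k * prodpos (c * q) q k) by ring.
  unfold Cdiv. ring.
Qed.

Lemma vwp_term_rot (q a b c : C) k : vwp_term q c a b k = vwp_term q a b c k.
Proof.
  unfold vwp_term. replace (c * a * b) with (a * b * c) by ring.
  replace (prodpos (c * q) q k * prodpos (a * q) q k * prodpos (b * q) q k)
    with (prodpos (a * q) q k * prodpos (b * q) q k * prodpos (c * q) q k) by ring.
  unfold Cdiv. ring.
Qed.

Lemma balanced_term_swap (q a b c : C) j : balanced_term q b a c j = balanced_term q a b c j.
Proof. unfold balanced_term. replace (b * a * c) with (a * b * c) by ring. unfold Cdiv. ring. Qed.

Lemma balanced_term_rot (q a b c : C) j : balanced_term q c a b j = balanced_term q a b c j.
Proof. unfold balanced_term. replace (c * a * b) with (a * b * c) by ring. unfold Cdiv. ring. Qed.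

Lemma vwp_transform_qpow (q a b c d e : C) n :
  q <> 0 -> (Cmod q < 1)%R -> a = cpow q (S n) ->
  b <> 0 -> c <> 0 -> d <> 0 -> e <> 0 ->
  (forall m, prodpos (b * q) q m <> 0) -> (forall m, prodpos (c * q) q m <> 0) ->
  (forall m, prodpos (d * q) q m <> 0) -> (forall m, prodpos (e * q) q m <> 0) ->
  (forall m, prodpos (q * q / (a * b * c)) q m <> 0) ->
  (forall m, prodpos (a * b * c / q) q m <> 0) ->
  sum_n (fun k => vwp_term q a b c k * de_factor q d e k) n
  = prefactor q a b c * sum_n (fun j => balanced_term q a b c j * de_weight q d e j) n :> C.
Proof.
  intros Hq Hq1 Ha Hb Hc Hd He Hbq Hcq Hdq Heq Hqabc Habcq.
  rewrite (prefactor_qpow q a b c n) by assumption.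
  subst a. apply vwp_de_transform; assumption.
Qed.

Lemma vwp_transform (q a b c d e : C) n :
  q <> 0 -> (Cmod q < 1)%R ->
  (a = cpow q (S n) \/ b = cpow q (S n) \/ c = cpow q (S n)) ->
  a <> 0 -> b <> 0 -> c <> 0 -> d <> 0 -> e <> 0 ->
  (forall m, prodpos (a * q) q m <> 0) -> (forall m, prodpos (b * q) q m <> 0) ->
  (forall m, prodpos (c * q) q m <> 0) -> (forall m, prodpos (d * q) q m <> 0) ->
  (forall m, prodpos (e * q) q m <> 0) ->
  (forall m, prodpos (q * q / (a * b * c)) q m <> 0) ->
  (forall m, prodpos (a * b * c / q) q m <> 0) ->
  sum_n (fun k => vwp_term q a b c k * de_factor q d e k) n
  = prefactor q a b c * sum_n (fun j => balanced_term q a b c j * de_weight q d e j) n :> C.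
Proof.
  intros Hq Hq1 Hqpow Ha Hb Hc Hd He Haq Hbq Hcq Hdq Heq Hqabc Habcq.
  destruct Hqpow as [Hqpow | [Hqpow | Hqpow]].
  - apply vwp_transform_qpow; assumption.
  - rewrite <- prefactor_swap.
    rewrite (sum_n_C_ext _ (fun k => vwp_term q b a c k * de_factor q d e k))
      by (intros k _; rewrite (vwp_term_swap q a b c); reflexivity).
    rewrite (sum_n_C_ext (fun j => balanced_term q a b c j * de_weight q d e j)
               (fun j => balanced_term q b a c j * de_weight q d e j))
      by (intros j _; rewrite (balanced_term_swap q a b c); reflexivity).
    replace (a * b * c) with (b * a * c) in * by ring.
    apply vwp_transform_qpow; assumption.
  - rewrite <- prefactor_rot.
    rewrite (sum_n_C_ext _ (fun k => vwp_term q c a b k * de_factor q d e k))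
      by (intros k _; rewrite (vwp_term_rot q a b c); reflexivity).
    rewrite (sum_n_C_ext (fun j => balanced_term q a b c j * de_weight q d e j)
               (fun j => balanced_term q c a b j * de_weight q d e j))
      by (intros j _; rewrite (balanced_term_rot q a b c); reflexivity).
    replace (a * b * c) with (c * a * b) in * by ring.
    apply vwp_transform_qpow; assumption.
Qed.

(** * The bilateral series *)

Definition bilateral_term (q a b c d e : C) (k : Z) : C :=
  qpoch (q / a) q k * qpoch (q / b) q k * qpoch (q / c) q k *
  qpoch (q / d) q k * qpoch (q / e) q k *
  (qpoch_rec a q k * qpoch_rec (b * q) q k * qpoch_rec (c * q) q k *
   qpoch_rec (d * q) q k * qpoch_rec (e * q) q k) *
  zpow (a * b * c * d * e) k.

Lemma qpoch_of_nat (x q : C) k : qpoch x q (Z.of_nat k) = prodpos x q k.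
Proof. destruct k; [reflexivity |]. simpl. rewrite SuccNat2Pos.id_succ. reflexivity. Qed.

Lemma qpoch_neg (x q : C) k : qpoch x q (- Z.of_nat (S k)) = / prodneg x q (S k).
Proof. simpl. rewrite SuccNat2Pos.id_succ. reflexivity. Qed.

Lemma qpoch_rec_of_nat (x q : C) k : qpoch_rec x q (Z.of_nat k) = / prodpos x q k.
Proof. destruct k; simpl; [field |]. rewrite SuccNat2Pos.id_succ. reflexivity. Qed.

Lemma qpoch_rec_neg (x q : C) k : qpoch_rec x q (- Z.of_nat (S k)) = prodneg x q (S k).
Proof. simpl. rewrite SuccNat2Pos.id_succ. reflexivity. Qed.

Lemma zpow_of_nat (x : C) k : zpow x (Z.of_nat k) = cpow x k.
Proof. destruct k; [reflexivity |]. simpl. rewrite SuccNat2Pos.id_succ. reflexivity. Qed.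

Lemma zpow_neg (x : C) k : zpow x (- Z.of_nat (S k)) = / cpow x (S k).
Proof. simpl. rewrite SuccNat2Pos.id_succ. reflexivity. Qed.

(* [qtri q m = q^(m(m-1)/2)], the power of [q] produced by reversing the
   factors of a [prodneg]. *)
Fixpoint qtri (q : C) (m : nat) : C :=
  match m with O => 1 | S m' => qtri q m' * cpow q m' end.

Lemma qtri_neq_0 (q : C) m : q <> 0 -> qtri q m <> 0.
Proof.
  intros Hq. induction m as [|m IH]; [apply C1_neq_0 |].
  apply Cmult_neq_0; [exact IH | apply cpow_neq_0, Hq].
Qed.

Lemma prodneg_q_div (q x : C) m : q <> 0 -> x <> 0 ->
  prodneg (q / x) q m = cpow (-1) m / cpow x m / qtri q m * prodpos x q m.
Proof.
  intros Hq Hx. induction m as [|m IH]; [simpl; field |].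
  simpl prodneg. rewrite IH, prodpos_S. simpl.
  assert (qtri q m <> 0) by (apply qtri_neq_0, Hq). field. neq0.
Qed.

Lemma prodneg_mul_q (q y : C) m : q <> 0 -> y <> 0 ->
  prodneg (y * q) q m = cpow (-1) m * cpow y m / qtri q m * prodpos (/ y) q m.
Proof.
  intros Hq Hy. induction m as [|m IH]; [simpl; field |].
  simpl prodneg. rewrite IH, prodpos_S. simpl.
  assert (qtri q m <> 0) by (apply qtri_neq_0, Hq). field. neq0.
Qed.

Lemma prodneg_prodpos_q_div (q a : C) m : q <> 0 -> a <> 0 ->
  prodneg a q m = cpow (-1) m * cpow a m / (qtri q m * cpow q m) * prodpos (q / a) q m.
Proof.
  intros Hq Ha. induction m as [|m IH]; [simpl; field |].
  simpl prodneg. rewrite IH, prodpos_S. simpl.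
  assert (qtri q m <> 0) by (apply qtri_neq_0, Hq). field. neq0.
Qed.

Lemma bilateral_term_pair (q a b c d e : C) k :
  q <> 0 -> a <> 0 -> b <> 0 -> c <> 0 -> d <> 0 -> e <> 0 ->
  1 - a <> 0 -> 1 - b <> 0 -> 1 - c <> 0 -> 1 - d <> 0 -> 1 - e <> 0 ->
  1 - a * cpow q k <> 0 ->
  prodpos (a * q) q k <> 0 -> prodpos (b * q) q k <> 0 -> prodpos (c * q) q k <> 0 ->
  prodpos (d * q) q k <> 0 -> prodpos (e * q) q k <> 0 ->
  bilateral_term q a b c d e (Z.of_nat k) + bilateral_term q a b c d e (- Z.of_nat (S k))
  = a / (1 - a) * (vwp_term q a b c k * de_factor q d e k).
Proof.
  intros Hq Ha Hb Hc Hd He Ha1 Hb1 Hc1 Hd1 He1 Hak Va Vb Vc Vd Ve.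
  unfold bilateral_term, vwp_term, de_factor.
  rewrite !qpoch_of_nat, !qpoch_neg, !qpoch_rec_of_nat, !qpoch_rec_neg, zpow_of_nat, zpow_neg.
  rewrite (prodneg_q_div q a), (prodneg_q_div q b), (prodneg_q_div q c),
    (prodneg_q_div q d), (prodneg_q_div q e) by assumption.
  rewrite (prodneg_mul_q q b), (prodneg_mul_q q c), (prodneg_mul_q q d),
    (prodneg_mul_q q e) by assumption.
  rewrite (prodneg_prodpos_q_div q a) by assumption.
  replace (prodpos a q k) with ((1 - a) * prodpos (a * q) q k / (1 - a * cpow q k))
    by (rewrite <- prodpos_shift, prodpos_S; field; exact Hak).
  rewrite (prodpos_shift a), (prodpos_shift b), (prodpos_shift c), (prodpos_shift d),
    (prodpos_shift e).
  rewrite (prodpos_shift (/ b)), (prodpos_shift (/ c)), (prodpos_shift (/ d)),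
    (prodpos_shift (/ e)).
  replace (/ b * q) with (q / b) by (unfold Cdiv; ring).
  replace (/ c * q) with (q / c) by (unfold Cdiv; ring).
  replace (/ d * q) with (q / d) by (unfold Cdiv; ring).
  replace (/ e * q) with (q / e) by (unfold Cdiv; ring).
  rewrite (prodpos_S (q / a)), !cpow_mul. simpl cpow.
  assert (Hs : cpow (-1) k <> 0) by (apply cpow_neq_0; intro E; apply C1_neq_0;
    replace (RtoC 1) with (- (-1)) by ring; rewrite E; ring).
  assert (HT : qtri q (S k) <> 0) by (apply qtri_neq_0, Hq).
  field. neq0.
Qed.

Lemma balanced_term_eq_0 (q a b c : C) n k :
  q <> 0 -> (a = cpow q (S n) \/ b = cpow q (S n) \/ c = cpow q (S n)) -> (n < k)%nat ->
  balanced_term q a b c k = 0.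
Proof.
  intros Hq Habc Hk. unfold balanced_term.
  destruct Habc as [-> | [-> | ->]]; rewrite prodpos_q_div_qpow_eq_0 by assumption;
    unfold Cdiv; ring.
Qed.

Lemma bilateral_term_of_nat_eq_0 (q a b c d e : C) n k :
  q <> 0 -> (a = cpow q (S n) \/ b = cpow q (S n) \/ c = cpow q (S n)) -> (n < k)%nat ->
  bilateral_term q a b c d e (Z.of_nat k) = 0.
Proof.
  intros Hq Habc Hk. unfold bilateral_term. rewrite !qpoch_of_nat.
  destruct Habc as [-> | [-> | ->]]; rewrite prodpos_q_div_qpow_eq_0 by assumption; ring.
Qed.

Lemma bilateral_term_neg_eq_0 (q a b c d e : C) n k :
  q <> 0 -> (a = cpow q (S n) \/ b = cpow q (S n) \/ c = cpow q (S n)) -> (n < k)%nat ->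
  bilateral_term q a b c d e (- Z.of_nat (S k)) = 0.
Proof.
  intros Hq Habc Hk. unfold bilateral_term. rewrite !qpoch_rec_neg.
  destruct Habc as [-> | [-> | ->]];
    [ rewrite (prodneg_qpow_eq_0 q (S n)) by (assumption || lia)
    | change (cpow q (S n) * q) with (cpow q (S (S n)));
      rewrite (prodneg_qpow_eq_0 q (S (S n))) by (assumption || lia) .. ];
    ring.
Qed.

Lemma is_bilateral_series_terminating (f : Z -> C) n :
  (forall k, (n < k)%nat -> f (Z.of_nat k) = 0) ->
  (forall k, (n < k)%nat -> f (- Z.of_nat (S k))%Z = 0) ->
  is_bilateral_series f (sum_n (fun k => f (Z.of_nat k) + f (- Z.of_nat (S k))%Z) n).
Proof.
  intros Hpos Hneg.
  exists (sum_n (fun k => f (Z.of_nat k)) n), (sum_n (fun k => f (- Z.of_nat (S k))%Z) n).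
  split; [| split].
  - apply is_series_terminating, Hpos.
  - apply is_series_terminating, Hneg.
  - apply sum_n_Cplus.
Qed.

Lemma one_minus_neq_0_of_prodneg (q x : C) :
  q <> 0 -> x <> 0 -> prodneg (q / x) q 1 <> 0 -> 1 - x <> 0.
Proof. intros Hq Hx H E. apply H. apply one_minus_eq_0 in E. subst x. simpl. field. exact Hq. Qed.

Lemma balanced_de_term_eq (q a b c d e : C) k :
  prodpos q q k <> 0 -> prodpos (q * q / (a * b * c)) q k <> 0 ->
  prodpos (d * q) q k <> 0 -> prodpos (e * q) q k <> 0 ->
  balanced_term q a b c k * de_weight q d e k =
  prodpos (q / a) q k * prodpos (q / b) q k * prodpos (q / c) q k * prodpos (d * e) q k /
  (prodpos q q k * prodpos (q * q / (a * b * c)) q k * prodpos (d * q) q k * prodpos (e * q) q k) *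
  cpow q k.
Proof. intros. unfold balanced_term, de_weight. field. neq0. Qed.

Lemma is_bilateral_series_transform (q a b c d e : C) n :
  q <> 0 -> (Cmod q < 1)%R ->
  (a = cpow q (S n) \/ b = cpow q (S n) \/ c = cpow q (S n)) ->
  a <> 0 -> b <> 0 -> c <> 0 -> d <> 0 -> e <> 0 ->
  1 - b <> 0 -> 1 - c <> 0 -> 1 - d <> 0 -> 1 - e <> 0 ->
  (forall m, prodpos a q m <> 0) -> (forall m, prodpos (b * q) q m <> 0) ->
  (forall m, prodpos (c * q) q m <> 0) -> (forall m, prodpos (d * q) q m <> 0) ->
  (forall m, prodpos (e * q) q m <> 0) ->
  (forall m, prodpos (q * q / (a * b * c)) q m <> 0) ->
  (forall m, prodpos (a * b * c / q) q m <> 0) ->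
  is_bilateral_series (bilateral_term q a b c d e)
    (a / (1 - a) * prefactor q a b c *
     sum_n (fun j => balanced_term q a b c j * de_weight q d e j) n).
Proof.
  intros Hq Hq1 Hqpow Ha Hb Hc Hd He Hb1 Hc1 Hd1 He1 Hpa Hbq Hcq Hdq Heq Hqabc Habcq.
  assert (Haq : forall m, prodpos (a * q) q m <> 0)
    by (intros m E; apply (Hpa (S m)); rewrite prodpos_shift, E; ring).
  assert (Ha1 : 1 - a <> 0) by (intro E; apply (Hpa 1%nat); simpl; rewrite <- E; ring).
  rewrite <- Cmult_assoc, <- vwp_transform, <- sum_n_Cmult_l by assumption.
  rewrite <- (sum_n_C_ext (fun k => bilateral_term q a b c d e (Z.of_nat k)
                                    + bilateral_term q a b c d e (- Z.of_nat (S k)))).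
  - apply is_bilateral_series_terminating; intros k Hk;
      [apply (bilateral_term_of_nat_eq_0 q a b c d e n)
      | apply (bilateral_term_neg_eq_0 q a b c d e n)];
      assumption.
  - intros k _. destruct (prodpos_neq_0_S _ _ _ (Hpa (S k))) as [_ Hak].
    apply bilateral_term_pair; auto.
Qed.

Theorem mainTheorem7 (q a b c d e : C) :
  0 < Cmod q -> Cmod q < 1 ->
  (exists n : nat, (1 <= n)%nat /\
     (a = cpow q n \/ b = cpow q n \/ c = cpow q n)) ->
  (* all terms are well defined *)
  a <> 0 -> b <> 0 -> c <> 0 -> d <> 0 -> e <> 0 ->
  (forall m : nat,
     prodneg (q / a) q m <> 0 /\ prodneg (q / b) q m <> 0 /\
     prodneg (q / c) q m <> 0 /\ prodneg (q / d) q m <> 0 /\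
     prodneg (q / e) q m <> 0) ->
  (forall m : nat,
     prodpos a q m <> 0 /\ prodpos (b * q) q m <> 0 /\
     prodpos (c * q) q m <> 0 /\ prodpos (d * q) q m <> 0 /\
     prodpos (e * q) q m <> 0) ->
  (forall m : nat,
     prodpos q q m <> 0 /\ prodpos (q * q / (a * b * c)) q m <> 0 /\
     prodpos (a * b * c / q) q m <> 0) ->
  exists T : C,
  is_series
    (fun k : nat =>
       qpoch (q / a) q (Z.of_nat k) * qpoch (q / b) q (Z.of_nat k) *
       qpoch (q / c) q (Z.of_nat k) * qpoch (d * e) q (Z.of_nat k) /
       (qpoch q q (Z.of_nat k) * qpoch (q * q / (a * b * c)) q (Z.of_nat k) *
        qpoch (d * q) q (Z.of_nat k) * qpoch (e * q) q (Z.of_nat k)) *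
       cpow q k) T /\
  is_bilateral_series
    (fun k : Z =>
       qpoch (q / a) q k * qpoch (q / b) q k * qpoch (q / c) q k *
       qpoch (q / d) q k * qpoch (q / e) q k *
       (qpoch_rec a q k * qpoch_rec (b * q) q k * qpoch_rec (c * q) q k *
        qpoch_rec (d * q) q k * qpoch_rec (e * q) q k) *
       zpow (a * b * c * d * e) k)
    (a * (qpoch_inf q q * qpoch_inf (a * b) q * qpoch_inf (b * c) q *
          qpoch_inf (a * c) q)
     / (q * (qpoch_inf a q * qpoch_inf (b * q) q * qpoch_inf (c * q) q *
             qpoch_inf (a * b * c / q) q))
     * T).
Proof.
  intros Hq0 Hq1 [[|n] [Hn Hqpow]] Ha Hb Hc Hd He Hneg Hpos Hpos2; [lia |].
  assert (Hq : q <> 0) by (apply Cmod_gt_0; exact Hq0).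
  assert (Hpa : forall m, prodpos a q m <> 0) by (intro m; apply Hpos).
  assert (Hbq : forall m, prodpos (b * q) q m <> 0) by (intro m; apply Hpos).
  assert (Hcq : forall m, prodpos (c * q) q m <> 0) by (intro m; apply Hpos).
  assert (Hdq : forall m, prodpos (d * q) q m <> 0) by (intro m; apply Hpos).
  assert (Heq : forall m, prodpos (e * q) q m <> 0) by (intro m; apply Hpos).
  assert (Hqabc : forall m, prodpos (q * q / (a * b * c)) q m <> 0) by (intro m; apply Hpos2).
  assert (Habcq : forall m, prodpos (a * b * c / q) q m <> 0) by (intro m; apply Hpos2).
  assert (Haq : forall m, prodpos (a * q) q m <> 0)
    by (intros m E; apply (Hpa (S m)); rewrite prodpos_shift, E; ring).
  assert (Ha1 : 1 - a <> 0) by (intro E; apply (Hpa 1%nat); simpl; rewrite <- E; ring).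
  destruct (Hneg 1%nat) as (_ & Hb1 & Hc1 & Hd1 & He1).
  apply one_minus_neq_0_of_prodneg in Hb1, Hc1, Hd1, He1; try assumption.
  exists (sum_n (fun j => balanced_term q a b c j * de_weight q d e j) n). split.
  - apply (is_series_ext (fun j => balanced_term q a b c j * de_weight q d e j)).
    + intros k. rewrite !qpoch_of_nat. apply balanced_de_term_eq; auto using prodpos_q_neq_0.
    + apply is_series_terminating. intros k Hk.
      rewrite (balanced_term_eq_0 q a b c n k) by assumption. ring.
  - rewrite qpoch_inf_prefactor by assumption.
    apply is_bilateral_series_transform; assumption.
Qed.
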